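(* Fix a real $\alpha>4$ and $\delta>0$. Let $B$ be the event that there exists $u\in x^{\perp}_{\circ}$ with $X_u\ge (1+\delta)\,s(\log s)^{\alpha}$. Then $\mathbb{P}(B)\to 0$ as $s\to\infty$, uniformly over all locally sparse generalized quadrangles $Q$ of order $(s,t)$ with $t\ge s(\log s)^{2\alpha}$ and all points $x$ of $Q$. In particular, asymptotically almost surely $|u^{\perp}\cap U|\le(1+\delta)s(\log s)^{\alpha}$ for all $u\in x^{\perp}\setminus S$.
   Context: A generalized quadrangle of order $(s,t)$ (with $s,t\ge 2$) is a point-line incidence structure in which every point lies on $t+1$ lines, every line contains $s+1$ points, two distinct points lie on at most one common line, and for every point $x$ and line $\ell$ with $x\notin\ell$ there is a unique point $x'\in\ell$ and a unique line $\ell'$ with $x,x'\in\ell'$. The quadrangle is locally sparse if for every set of three points, the number of points collinear with all three is at most $s+1$. Let $\mathcal{P}$ be the point set. For a point $u$, $u^{\perp}$ is the set of points collinear with $u$ (including $u$), $u^{\perp}_{\circ}=u^{\perp}\setminus\{u\}$, and for $R\subseteq\mathcal{P}$, $R^{\bowtie}=\bigcup_{y\in R}y^{\perp}$. Logarithms are natural. Random construction: fix $\alpha>4$ and a point $x$. Define $p$ by $ps=(s\log t-\alpha s\log\log s)/t$. Independently for each of the $t+1$ lines $\ell$ through $x$, with probability $ps$ the line is chosen, and on each chosen line one point of $\ell\setminus\{x\}$ is selected uniformly at random (independently). Let $S$ be the set of selected points and $U=\mathcal{P}\setminus(S\cup\{x\})^{\bowtie}$. For $u\in x^{\perp}_{\circ}$,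 let $U(u)$ be the set of points of $\mathcal{P}\setminus x^{\perp}$ not in $(S\setminus\{u\})^{\bowtie}$ and $X_u=|u^{\perp}\cap U(u)|$ (so $X_u=|u^\perp\cap U|$ when $u\notin S$). *)

From Stdlib Require Import Reals.
From mathcomp Require Import all_boot.
Set Implicit Arguments. Unset Strict Implicit. Unset Printing Implicit Defensive.

Section GQ.
Variables (P L : finType) (I : P -> L -> bool).

Definition collinear (x y : P) : bool := [exists l, I x l && I y l].

(* u^perp, including u *)
Definition perp (u : P) : {set P} := [set y | collinear u y].

Definition perp0 (u : P) : {set P} := perp u :\ u.

Definition bowtie (R : {set P}) : {set P} := [set z | [exists y in R, collinear y z]].

Definition is_GQ (s t : nat) : Prop :=
  [/\ ((2 <= s)%N /\ (2 <= t)%N),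
      (forall p : P, #|[set l | I p l]| = t.+1),
      (forall l : L, #|[set p | I p l]| = s.+1),
      (forall p q : P, p != q -> (#|[set l | I p l && I q l]| <= 1)%N) &
      (forall (p : P) (l : L), ~~ I p l ->
         #|[set pl : P * L | [&& I pl.1 l, I p pl.2 & I pl.1 pl.2]]| = 1%N)].

Definition locally_sparse (s : nat) : Prop :=
  forall a b c : P, a != b -> a != c -> b != c ->
    (#|perp a :&: perp b :&: perp c| <= s.+1)%N.

Local Open Scope R_scope.

Definition ps (s t : nat) (alpha : R) : R :=
  (INR s * ln (INR t) - alpha * INR s * ln (ln (INR s))) / INR t.

(* An outcome assigns to each line the selected point (if any).  Lines not
   through x select nothing; a line l through x is not chosen with prob. 1-ps
   and otherwise selects one of the s points of l \ {x} uniformly, each with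
   probability ps/s.  The weight below is the product probability mass;
   outcomes inconsistent with the construction get weight 0. *)
Definition outcome := {ffun L -> option P}.

Definition line_weight (s t : nat) (alpha : R) (x : P) (l : L) (o : option P) : R :=
  if I x l then
    match o with
    | None => 1 - ps s t alpha
    | Some y => if I y l && (y != x) then ps s t alpha / INR s else 0
    end
  else match o with None => 1 | Some _ => 0 end.

Definition weight (s t : nat) (alpha : R) (x : P) (w : outcome) : R :=
  \big[Rmult/1]_(l : L) line_weight s t alpha x l (w l).

Definition selected (x : P) (w : outcome) : {set P} :=
  [set y | [exists l, [&& I x l, I y l, y != x & w l == Some y]]].

Definition Uu (x : P) (w : outcome) (u : P) : {set P} :=
  [set z | (z \notin perp x) && (z \notin bowtie (selected x w :\ u))].

Definition Xu (x : P) (w : outcome) (u : P) : nat := #|perp u :&: Uu x w u|.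

Definition Rleb (a b : R) : bool := if Rle_dec a b then true else false.

Definition eventB (s : nat) (alpha delta : R) (x : P) (w : outcome) : bool :=
  [exists u in perp0 x,
     Rleb ((1 + delta) * INR s * Rpower (ln (INR s)) alpha) (INR (Xu x w u))].

Definition probB (s t : nat) (alpha delta : R) (x : P) : R :=
  \big[Rplus/0]_(w : outcome | eventB s alpha delta x w) weight s t alpha x w.

End GQ.

(* For u in x^perp_circ and k about c log s, the k-th binomial moment
   of X_u is a sum over the k-subsets A of u^perp \ x^perp (at most 'C(ts,k)
   of them) of P[A in U(u)].  That event forces no point of the "shadow" of A
   (points of x^perp_circ \ {u} collinear with A) to be selected; selections
   on distinct lines are independent, so this has probability at most
   exp (- ps/s |shadow A|), and by the quadrangle axiom, local sparseness and
   Bonferroni |shadow A| >= kt - k(k-1)(s+1).  Markov's inequality for the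
   k-th factorial moment and a union bound over the <= (t+1)s points u give
   an explicit bound on P(B), which a real-analysis estimate (using also
   t <= 2s^2, a consequence of local sparseness) shows is below eps. *)

From HB Require Import structures.
From Stdlib Require Import Reals Lra ZArith.
From mathcomp Require Import all_boot zify.
Set Implicit Arguments. Unset Strict Implicit. Unset Printing Implicit Defensive.

(* A cardinality is a sum of indicators; this turns every counting argument
   below into an exchange of two finite sums. *)
Lemma card_indicator (T : finType) (A : {set T}) : #|A| = \sum_x (x \in A : nat).
Proof. by rewrite -sum1_card big_mkcond; apply: eq_bigr => x _; case: (x \in A). Qed.

Lemma card_le_sum_cover (T U : finType) (A : {set T}) (C : {set U}) (B : U -> {set T}) :
  (forall z, z \in A -> exists2 y, y \in C & z \in B y) ->
  (#|A| <= \sum_(y in C) #|B y|)%N.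
Proof.
move=> cover; under eq_bigr => y _ do rewrite card_indicator.
rewrite card_indicator exchange_big /=; apply: leq_sum => z _.
case zA: (z \in A) => //; have [y yC zB] := cover z zA.
by rewrite (bigD1 y) //= zB.
Qed.

Lemma sum_le_card_packing (T U : finType) (A : {set T}) (C : {set U}) (B : U -> {set T}) :
  (forall y, y \in C -> B y \subset A) ->
  (forall y1 y2 z, y1 \in C -> y2 \in C -> z \in B y1 -> z \in B y2 -> y1 = y2) ->
  (\sum_(y in C) #|B y| <= #|A|)%N.
Proof.
move=> subA disj; under eq_bigr => y _ do rewrite card_indicator.
rewrite [#|A|]card_indicator exchange_big /=; apply: leq_sum => z _.
case: (boolP [exists y in C, z \in B y]) => [/existsP[y /andP[yC zB]]|/existsPn none].
  rewrite (bigD1 y) //= zB big1 ?addn0 ?(subsetP (subA y yC) z zB) //.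
  move=> y' /andP[y'C y'y]; case zB': (z \in B y') => //.
  by rewrite (disj y' y z y'C yC zB' zB) eqxx in y'y.
by rewrite big1 // => y yC; have := none y; rewrite yC /= => /negbTE ->.
Qed.

Lemma double_count (T U : finType) (A : {set T}) (B : {set U}) (r : T -> U -> bool) :
  \sum_(a in A) #|[set b in B | r a b]| = \sum_(b in B) #|[set a in A | r a b]|.
Proof.
under eq_bigr => a _ do rewrite card_indicator.
under [RHS]eq_bigr => b _ do rewrite card_indicator.
rewrite exchange_big /= [RHS]big_mkcond /=; apply: eq_bigr => b _.
case bB: (b \in B); last by apply: big1 => a _; rewrite inE bB.
rewrite big_mkcond; apply: eq_bigr => a _; rewrite !inE bB.
by case: (a \in A).
Qed.

Lemma sum_ordered_pairs (U : finType) (A : {set U}) (f : U -> bool) :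
  let c := (\sum_(a in A) (f a : nat))%N in
  (\sum_(a in A) \sum_(b in A :\ a) ((f a && f b) : nat) = c * (c - 1))%N.
Proof.
move=> c; transitivity (\sum_(a in A) f a * (c - 1))%N; last by rewrite -big_distrl.
apply: eq_bigr => a aA; case fa: (f a); last by rewrite big1.
have -> : c = (1 + \sum_(b in A :\ a) (f b : nat))%N.
  by rewrite /c (bigD1 a) //= fa; congr (_ + _); apply: eq_bigl => b; rewrite !inE andbC.
by rewrite mul1n add1n subn1.
Qed.

Lemma bonferroni (T U : finType) (A : {set U}) (K : {set T}) (Kf : U -> {set T}) :
  (forall a y, a \in A -> y \in Kf a -> y \in K) ->
  (\sum_(a in A) #|Kf a| <= #|K| + \sum_(a in A) \sum_(b in A :\ a) #|Kf a :&: Kf b|)%N.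
Proof.
move=> subK; under eq_bigr => a _ do rewrite card_indicator.
under [X in (_ <= _ + X)%N]eq_bigr => a _.
  rewrite (eq_bigr (fun b => \sum_y ((y \in Kf a) && (y \in Kf b) : nat))); last first.
    by move=> b _; rewrite card_indicator; apply: eq_bigr => y _; rewrite inE.
  rewrite exchange_big /=; over.
rewrite exchange_big /= [X in (_ <= _ + X)%N]exchange_big /= card_indicator -big_split /=.
(* pointwise, with c the number of a such that y \in Kf a:
   c <= [y \in K] + c (c - 1) *)
apply: leq_sum => y _; rewrite sum_ordered_pairs.
set c := (\sum_(a in A) _)%N.
case: (posnP c) => [-> //|c_gt0].
have [a aA yKa] : exists2 a, a \in A & y \in Kf a.
  apply/exists_inP; apply: contraTT c_gt0 => /exists_inPn none.
  by rewrite lt0n negbK /c sum_nat_eq0; apply/forall_inP => a /none /negbTE ->.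
rewrite (subK a y aA yKa) /=; nia.
Qed.

(* Elementary geometry of a generalized quadrangle of order (s,t). *)
Section Quadrangle.
Variables (P L : finType) (I : P -> L -> bool) (s t : nat).
Hypothesis HG : is_GQ I s t.

Lemma lines_card p : #|[set l | I p l]| = t.+1.
Proof. by case: HG. Qed.

Lemma points_card l : #|[set p | I p l]| = s.+1.
Proof. by case: HG. Qed.

Lemma s_ge2 : (2 <= s)%N. Proof. by case: HG => [[]]. Qed.
Lemma t_ge2 : (2 <= t)%N. Proof. by case: HG => [[]]. Qed.

Lemma exists_line p : exists l, I p l.
Proof.
have : (0 < #|[set l | I p l]|)%N by rewrite lines_card.
by case/card_gt0P => l; rewrite inE; exists l.
Qed.

Lemma collinearC a b : collinear I a b = collinear I b a.
Proof. by apply/existsP/existsP => -[l /andP[al bl]]; exists l; rewrite al bl. Qed.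

Lemma collinearI a b l : I a l -> I b l -> collinear I a b.
Proof. by move=> al bl; apply/existsP; exists l; rewrite al bl. Qed.

Lemma collinear_refl p : collinear I p p.
Proof. by have [l pl] := exists_line p; apply: (collinearI pl pl). Qed.

Lemma perp_refl p : p \in perp I p.
Proof. by rewrite inE collinear_refl. Qed.

Lemma line_unique p q l l' : p != q -> I p l -> I q l -> I p l' -> I q l' -> l = l'.
Proof.
move=> pq pl ql pl' ql'; case: HG => _ _ _ le1 _.
by apply: (card_le1_eqP (le1 p q pq)); rewrite inE ?pl ?ql ?pl' ?ql'.
Qed.

Lemma projection_exists p l : ~~ I p l -> exists2 y, I y l & collinear I p y.
Proof.
move=> pl; case: HG => _ _ _ _ proj; have /eqP/cards1P[[a m] E] := proj p l pl.
have : (a, m) \in [set (a, m)] by rewrite inE.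
by rewrite -E inE /= => /and3P[al pm am]; exists a => //; apply: collinearI pm am.
Qed.

Lemma projection_unique p l y1 y2 : ~~ I p l ->
  I y1 l -> collinear I p y1 -> I y2 l -> collinear I p y2 -> y1 = y2.
Proof.
move=> pl y1l /existsP[m1 /andP[pm1 y1m1]] y2l /existsP[m2 /andP[pm2 y2m2]].
case: HG => _ _ _ _ proj; have /eqP/cards1P[[a b] E] := proj p l pl.
have : (y1, m1) \in [set (a, b)] by rewrite -E inE /= y1l pm1 y1m1.
have : (y2, m2) \in [set (a, b)] by rewrite -E inE /= y2l pm2 y2m2.
by rewrite !inE => /eqP[-> _] /eqP[-> _].
Qed.

Lemma line_minus_point_card l p : I p l -> #|[set q | I q l] :\ p| = s.
Proof. by move=> pl; have := points_card l; rewrite (cardsD1 p) inE pl => -[]. Qed.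

Lemma off_line_of_noncollinear x a l : a \notin perp I x -> I x l -> ~~ I a l.
Proof. by move=> ax xl; apply: contra ax => al; rewrite inE (collinearI xl al). Qed.

(* A point a not collinear with x projects onto each of the t+1 lines on x,
   at t+1 distinct points of x^perp_circ. *)
Lemma projection_card x a : a \notin perp I x -> (t.+1 <= #|perp I a :&: perp0 I x|)%N.
Proof.
move=> ax; pose f l := odflt x [pick y | I y l && collinear I a y].
have fP l : I x l -> I (f l) l && collinear I a (f l).
  move=> xl; rewrite /f; case: pickP => [y //|none].
  have [y yl ay] := projection_exists (off_line_of_noncollinear ax xl).
  by have := none y; rewrite yl ay.
have fx l : I x l -> f l != x.
  move=> xl; have /andP[_ af] := fP l xl; apply: contra ax => /eqP fl.
  by rewrite inE collinearC -fl.
rewrite -(lines_card x) -(card_in_imset (f := f)).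
  apply: subset_leq_card; apply/subsetP => y /imsetP[l]; rewrite inE => xl ->.
  have /andP[fl af] := fP l xl.
  by rewrite !inE af fx //= (collinearI xl fl).
move=> l1 l2; rewrite !inE => xl1 xl2 E.
have /andP[f1 _] := fP l1 xl1; have /andP[f2 _] := fP l2 xl2.
by apply: (line_unique (fx l1 xl1) f1 xl1) => //; rewrite E.
Qed.

(* x^perp_circ is covered by the t+1 lines on x, each contributing s points. *)
Lemma perp0_card x : (#|perp0 I x| <= t.+1 * s)%N.
Proof.
apply: leq_trans (card_le_sum_cover (C := [set m | I x m])
  (B := fun m => [set q | I q m] :\ x) _) _.
  move=> z; rewrite !inE => /andP[zx /existsP[m /andP[xm zm]]].
  by exists m; rewrite !inE ?xm ?zm ?zx.
rewrite (eq_bigr (fun _ => s)) => [|m]; last by rewrite inE => xm; rewrite line_minus_point_card.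
by rewrite sum_nat_const lines_card.
Qed.

(* For u in x^perp_circ, the points of u^perp outside x^perp lie on the t lines
   on u other than the line ux, each contributing at most s points. *)
Lemma perp_outside_card x u : u \in perp0 I x -> (#|perp I u :\: perp I x| <= t * s)%N.
Proof.
rewrite !inE => /andP[ux /existsP[l0 /andP[xl0 ul0]]].
pose C := [set m | I u m & ~~ I x m].
apply: leq_trans (card_le_sum_cover (C := C) (B := fun m => [set q | I q m] :\ u) _) _.
  move=> z; rewrite !inE => /andP[zx /existsP[m /andP[um zm]]].
  exists m; rewrite !inE ?um ?zm ?andbT //=.
    by apply: contra zx => xm; rewrite (collinearI xm zm).
  by apply: contra zx => /eqP ->; rewrite (collinearI xl0 ul0).
rewrite (eq_bigr (fun _ => s)) => [|m]; last first.
  by rewrite inE => /andP[um _]; rewrite line_minus_point_card.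
rewrite sum_nat_const leq_mul2r -ltnS -(lines_card u); apply/orP; right.
apply: proper_card; apply/properP; split.
  by apply/subsetP => m; rewrite !inE => /andP[].
by exists l0; rewrite !inE ?ul0 ?xl0.
Qed.

(* Every point z off x^perp is collinear with a point y != x of a fixed line
   on x; hence |P \ x^perp| <= s * (t * s). *)
Lemma outside_perp_card x : (#|~: perp I x| <= s * (t * s))%N.
Proof.
have [l0 xl0] := exists_line x; pose C := [set q | I q l0] :\ x.
apply: leq_trans (card_le_sum_cover (C := C) (B := fun y => perp I y :\: perp I x) _) _.
  move=> z; rewrite inE => zx.
  have [y yl zy] := projection_exists (off_line_of_noncollinear zx xl0).
  exists y; last by move: zx; rewrite !inE => ->; rewrite collinearC.
  rewrite !inE yl andbT; apply: contra zx => /eqP yx.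
  by rewrite inE collinearC -yx.
apply: (@leq_trans (\sum_(y in C) t * s)).
  apply: leq_sum => y; rewrite !inE => /andP[yx yl]; apply: perp_outside_card.
  by rewrite !inE yx (collinearI xl0 yl).
by rewrite sum_nat_const line_minus_point_card.
Qed.

(* Some point is not collinear with x: walk from x along a line l0 to p, then
   along another line m on p to y; y cannot be collinear with x. *)
Lemma noncollinear_exists x : exists y, y \notin perp I x.
Proof.
have other (T : finType) (A : {set T}) (a : T) : (1 < #|A|)%N -> exists2 b, b \in A & b != a.
  case/card_gt1P => b1 [b2 [b1A b2A b12]].
  by case: (eqVneq b1 a) => [E|]; [exists b2; rewrite // -E eq_sym | exists b1].
have [l0 xl0] := exists_line x.
have [p] := other _ [set q | I q l0] x (ltac:(rewrite points_card; have := s_ge2; lia)).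
rewrite inE => pl0 px.
have [m] := other _ [set m | I p m] l0 (ltac:(rewrite lines_card; have := t_ge2; lia)).
rewrite inE => pm ml0.
have [y] := other _ [set q | I q m] p (ltac:(rewrite points_card; have := s_ge2; lia)).
rewrite inE => ym yp.
have yl0 : ~~ I y l0 by apply: contra ml0 => yl0; rewrite (line_unique yp ym pm yl0 pl0).
exists y; rewrite inE collinearC; apply: contra px => yx.
by rewrite -(projection_unique yl0 xl0 yx pl0 (collinearI ym pm)).
Qed.

Lemma lines_avoiding_card w x y : w != x -> w != y ->
  (t - 1 <= #|[set m | [&& I w m, ~~ I x m & ~~ I y m]]|)%N.
Proof.
move=> wx wy; set M := [set m | _].
have le1 z : w != z -> (#|[set m | I w m && I z m]| <= 1)%N.
  by case: HG => _ _ _ le1 _; apply: le1.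
have cover : [set m | I w m] \subset
    M :|: [set m | I w m && I x m] :|: [set m | I w m && I y m].
  by apply/subsetP => m; rewrite !inE => ->; case: (I x m); case: (I y m).
have := leq_trans (subset_leq_card cover)
  (leq_trans (leq_card_setU _ _) (leq_add (leq_card_setU _ _) (le1 y wy))).
by rewrite lines_card; have := le1 x wx; lia.
Qed.

(* For non-collinear x, y and w in y^perp :&: x^perp_circ, the point w is
   collinear with at least (t-1)s points collinear with neither x nor y: s
   points on each line on w missing x and y. *)
Lemma far_neighbours_card x y w : y \notin perp I x -> w \in perp I y :&: perp0 I x ->
  ((t - 1) * s <= #|[set z in ~: (perp I x :|: perp I y) | collinear I w z]|)%N.
Proof.
move=> yx; rewrite !inE => /and3P[yw wx xw].
have wy : w != y by apply: contra yx => /eqP <-; rewrite inE.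
pose M := [set m | [&& I w m, ~~ I x m & ~~ I y m]].
apply: leq_trans (_ : #|M| * s <= _)%N; first by rewrite leq_mul2r lines_avoiding_card ?orbT.
rewrite -sum_nat_const (eq_bigr (fun m => #|[set q | I q m] :\ w|)) => [|m]; last first.
  by rewrite inE => /andP[wm _]; rewrite line_minus_point_card.
apply: sum_le_card_packing => [m|m1 m2 z]; rewrite !inE.
  move=> /and3P[wm xm ym]; apply/subsetP => z; rewrite !inE => /andP[zw zm].
  rewrite (collinearI wm zm) andbT negb_or; apply/andP; split.
    by apply: contra zw => xz; rewrite (projection_unique xm zm xz wm xw).
  by apply: contra zw => yz; rewrite (projection_unique ym zm yz wm yw).
move=> /andP[wm1 _] /andP[wm2 _] /andP[zw zm1] /andP[_ zm2].
exact: (line_unique zw zm1 wm1 zm2 wm2).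
Qed.
End Quadrangle.

(* In a locally sparse quadrangle, t <= 2 s^2.  Fix y not collinear with x
   and double count the pairs (w, z) with w in y^perp :&: x^perp_circ and z
   collinear with w but with neither x nor y: there are at least
   (t+1)(t-1)s of them, and at most (s^2 t)(s+1) by local sparseness. *)
Lemma t_le_2s2 (P L : finType) (I : P -> L -> bool) (s t : nat) (x : P) :
  is_GQ I s t -> locally_sparse I s -> (t <= 2 * s ^ 2)%N.
Proof.
move=> HG HLS; have [y yx] := noncollinear_exists HG x.
have xy : x != y by apply: contra yx => /eqP <-; rewrite (perp_refl HG).
pose W := perp I y :&: perp0 I x; pose Z := ~: (perp I x :|: perp I y).
have sparse z : z \in Z -> (#|[set w in W | collinear I w z]| <= s.+1)%N.
  rewrite !inE negb_or => /andP[xz yz].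
  have xz' : x != z by apply: contra xz => /eqP <-; rewrite (collinear_refl HG).
  have yz' : y != z by apply: contra yz => /eqP <-; rewrite (collinear_refl HG).
  apply: leq_trans (HLS x y z xy xz' yz'); apply: subset_leq_card; apply/subsetP => w.
  by rewrite !inE => /andP[/and3P[-> _ ->] wz]; rewrite collinearC wz.
have Z_card : (#|Z| <= s * (t * s))%N.
  apply: leq_trans (outside_perp_card HG x); apply: subset_leq_card.
  by apply/subsetP => z; rewrite !inE negb_or => /andP[].
have pairs : (t.+1 * ((t - 1) * s) <= s * (t * s) * s.+1)%N.
  apply: (@leq_trans (\sum_(w in W) #|[set z in Z | collinear I w z]|)).
    apply: leq_trans (_ : \sum_(w in W) ((t - 1) * s) <= _)%N.
      by rewrite sum_nat_const leq_mul2r (projection_card HG) ?orbT.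
    by apply: leq_sum => w; apply: far_neighbours_card.
  rewrite double_count; apply: leq_trans (_ : \sum_(z in Z) s.+1 <= _)%N.
    by apply: leq_sum => z; apply: sparse.
  by rewrite sum_nat_const leq_mul2r Z_card.
by have := s_ge2 HG; have := t_ge2 HG; nia.
Qed.

Section Shadow.
Variables (P L : finType) (I : P -> L -> bool) (s t : nat) (x u : P).
Hypothesis HG : is_GQ I s t.
Hypothesis HLS : locally_sparse I s.
Hypothesis Hu : u \in perp0 I x.

(* The shadow of a set A of points: the points of x^perp_circ other than u that
   are collinear with some point of A.  If one of them is selected, some point
   of A leaves U(u). *)
Definition shadow (A : {set P}) : {set P} :=
  [set y in perp0 I x :\ u | [exists a in A, collinear I y a]].

(* Each a in A off x^perp sees t points of x^perp_circ other than u, and two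
   points of A share at most s+1 of them by local sparseness; so by Bonferroni
   the shadow of A has at least |A| t - |A| (|A| - 1) (s + 1) points. *)
Lemma shadow_card (A : {set P}) : A \subset perp I u :\: perp I x ->
  (#|A| * t <= #|shadow A| + #|A| * (#|A| - 1) * s.+1)%N.
Proof.
move=> HA; pose Kf a := (perp I a :&: perp0 I x) :\ u.
have Aoff a : a \in A -> collinear I u a && (a \notin perp I x).
  by move=> aA; have := subsetP HA a aA; rewrite !inE andbC.
have sees a : a \in A -> (t <= #|Kf a|)%N.
  move=> aA; have /andP[ua ax] := Aoff a aA.
  have := projection_card HG ax; rewrite (cardsD1 u) !inE collinearC ua.
  by move: Hu; rewrite !inE => /andP[-> ->].
have in_shadow a y : a \in A -> y \in Kf a -> y \in shadow A.
  move=> aA; rewrite !inE => /and4P[yu ay yx xy].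
  by rewrite yu yx xy; apply/existsP; exists a; rewrite aA collinearC.
have shared a b : a \in A -> b \in A :\ a -> (#|Kf a :&: Kf b| <= s.+1)%N.
  move=> aA; rewrite !inE => /andP[ba bA].
  have /andP[_ ax] := Aoff a aA; have /andP[_ bx] := Aoff b bA.
  have xa : x != a by apply: contra ax => /eqP <-; rewrite (perp_refl HG).
  have xb : x != b by apply: contra bx => /eqP <-; rewrite (perp_refl HG).
  have ab : a != b by rewrite eq_sym.
  apply: leq_trans (HLS xa xb ab).
  apply: subset_leq_card; apply/subsetP => y; rewrite !inE.
  by move=> /andP[/and4P[_ -> _ ->] /and4P[_ -> _ _]].
have pairs : (\sum_(a in A) \sum_(b in A :\ a) #|Kf a :&: Kf b| <= #|A| * (#|A| - 1) * s.+1)%N.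
  rewrite -mulnA -sum_nat_const; apply: leq_sum => a aA.
  rewrite (cardsD1 a A) aA add1n subn1 /= -sum_nat_const.
  by apply: leq_sum => b; apply: shared.
rewrite -sum_nat_const; apply: leq_trans (leq_sum _ sees) _.
by apply: leq_trans (bonferroni in_shadow) _; rewrite leq_add2l.
Qed.
End Shadow.

Lemma ffact_ge_pow n k : ((n - k) ^ k <= n ^_ k)%N.
Proof.
rewrite ffact_prod -[X in (_ ^ X)%N](card_ord k) -prod_nat_const.
by apply: leq_prod => i _; apply: leq_sub2l; apply: ltnW.
Qed.

Lemma ffact_le_pow n k : (n ^_ k <= n ^ k)%N.
Proof.
rewrite ffact_prod -[X in (_ ^ X)%N](card_ord k) -prod_nat_const.
by apply: leq_prod => i _; apply: leq_subr.
Qed.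

Local Open Scope R_scope.

Lemma Rplus_associative : associative Rplus.
Proof. by move=> a b c; rewrite Rplus_assoc. Qed.
Lemma Rmult_associative : associative Rmult.
Proof. by move=> a b c; rewrite Rmult_assoc. Qed.
HB.instance Definition _ := Monoid.isComLaw.Build R 0 Rplus Rplus_associative Rplus_comm Rplus_0_l.
HB.instance Definition _ := Monoid.isComLaw.Build R 1 Rmult Rmult_associative Rmult_comm Rmult_1_l.
HB.instance Definition _ := Monoid.isMulLaw.Build R 0 Rmult Rmult_0_l Rmult_0_r.
HB.instance Definition _ := Monoid.isAddLaw.Build R Rmult Rplus Rmult_plus_distr_r Rmult_plus_distr_l.

Lemma leR_sum (T : finType) (Pr : pred T) (F G : T -> R) :
  (forall i, Pr i -> F i <= G i) ->
  \big[Rplus/0]_(i | Pr i) F i <= \big[Rplus/0]_(i | Pr i) G i.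
Proof. by move=> FG; apply: (big_ind2 (fun a b => a <= b)) => // *; lra. Qed.

Lemma sumR_ge0 (T : finType) (Pr : pred T) (F : T -> R) :
  (forall i, Pr i -> 0 <= F i) -> 0 <= \big[Rplus/0]_(i | Pr i) F i.
Proof. by move=> F0; apply: (big_ind (fun a => 0 <= a)) => // *; lra. Qed.

Lemma sumR_le_full (T : finType) (Pr : pred T) (F : T -> R) :
  (forall i, 0 <= F i) -> \big[Rplus/0]_(i | Pr i) F i <= \big[Rplus/0]_i F i.
Proof.
move=> F0; rewrite big_mkcond /=; apply: leR_sum => i _.
by case: (Pr i); [apply: Rle_refl | apply: F0].
Qed.

Lemma prodR_ge0 (T : finType) (Pr : pred T) (F : T -> R) :
  (forall i, Pr i -> 0 <= F i) -> 0 <= \big[Rmult/1]_(i | Pr i) F i.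
Proof. by move=> F0; apply: (big_ind (fun a => 0 <= a)) => // *; [lra | nra]. Qed.

Lemma leR_prod (T : finType) (Pr : pred T) (F G : T -> R) :
  (forall i, Pr i -> 0 <= F i <= G i) ->
  \big[Rmult/1]_(i | Pr i) F i <= \big[Rmult/1]_(i | Pr i) G i.
Proof.
move=> FG; suff [] : 0 <= \big[Rmult/1]_(i | Pr i) F i <= \big[Rmult/1]_(i | Pr i) G i by [].
by apply: (big_ind2 (fun a b => 0 <= a <= b)) => // [|a b c d [? ?] [? ?]]; [lra | nra].
Qed.

Lemma INR_sum (T : finType) (Pr : pred T) (F : T -> nat) :
  INR (\sum_(i | Pr i) F i) = \big[Rplus/0]_(i | Pr i) INR (F i).
Proof. exact: (big_morph INR plus_INR). Qed.

Lemma exp_sum (T : finType) (Pr : pred T) (F : T -> R) :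
  exp (\big[Rplus/0]_(i | Pr i) F i) = \big[Rmult/1]_(i | Pr i) exp (F i).
Proof. exact: (big_morph exp exp_plus exp_0). Qed.

Lemma sumR_const (T : finType) (A : {set T}) (c : R) :
  \big[Rplus/0]_(i in A) c = INR #|A| * c.
Proof. by rewrite -sum1_card INR_sum big_distrl /=; apply: eq_bigr => i _; lra. Qed.

Lemma sumR_option (T : finType) (x0 : T) (F : option T -> R) :
  \big[Rplus/0]_(o : option T) F o = F None + \big[Rplus/0]_(p : T) F (Some p).
Proof.
rewrite (bigD1 None) //=; congr (_ + _).
by rewrite (reindex (@Some T)) /=; [apply: eq_bigl | exists (odflt x0) => [|[]]].
Qed.

Lemma exp_le_mono a b : a <= b -> exp a <= exp b.
Proof. by case/Rle_lt_or_eq_dec => [/exp_increasing/Rlt_le | ->] //; apply: Rle_refl. Qed.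

Lemma ln_le_mono a b : 0 < a -> a <= b -> ln a <= ln b.
Proof. by move=> a0 /Rle_lt_or_eq_dec[/(ln_increasing _ _ a0)/Rlt_le | ->] //; apply: Rle_refl. Qed.

Lemma exp_mul_nat (k : nat) y : exp (INR k * y) = exp y ^ k.
Proof.
elim: k => [|k IH]; first by rewrite Rmult_0_l exp_0.
by rewrite S_INR Rmult_plus_distr_r Rmult_1_l exp_plus IH /=; ring.
Qed.

Lemma INR_addn m n : INR (m + n)%N = INR m + INR n.
Proof. exact: plus_INR. Qed.

Lemma INR_muln m n : INR (m * n)%N = INR m * INR n.
Proof. exact: mult_INR. Qed.

Lemma INR_subn m n : (n <= m)%N -> INR (m - n)%N = INR m - INR n.
Proof. by move/leP; apply: minus_INR. Qed.

Lemma INR_expn m n : INR (m ^ n)%N = INR m ^ n.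
Proof. by rewrite -pow_INR; congr INR; elim: n => // n IH; rewrite expnS IH. Qed.

Lemma INR_leq m n : (m <= n)%N -> INR m <= INR n.
Proof. by move/leP; apply: le_INR. Qed.

Section RandomSelection.
Variables (P L : finType) (I : P -> L -> bool) (s t : nat) (alpha : R) (x : P).
Hypothesis HG : is_GQ I s t.
Hypothesis Hps : 0 <= ps s t alpha <= 1.

Local Notation W := (weight I s t alpha x).
(* the probability that a given point of x^perp_circ is selected *)
Local Notation q := (ps s t alpha / INR s).

Definition prob (E : pred (outcome P L)) : R := \big[Rplus/0]_(w | E w) W w.
Definition expect (X : outcome P L -> R) : R := \big[Rplus/0]_w (W w * X w).

Lemma s_pos : 0 < INR s.
Proof. by apply: lt_0_INR; apply/ltP; have := s_ge2 HG; lia. Qed.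

Lemma q_ge0 : 0 <= q.
Proof. by apply: Rmult_le_pos; [lra | apply/Rlt_le/Rinv_0_lt_compat/s_pos]. Qed.

Lemma q_times_s : q * INR s = ps s t alpha.
Proof. by field; have := s_pos; lra. Qed.

Lemma line_weight_ge0 l o : 0 <= line_weight I s t alpha x l o.
Proof.
rewrite /line_weight; have := q_ge0.
by case: (I x l); case: o => [y|]; rewrite ?if_same; try case: ifP; lra.
Qed.

Lemma weight_ge0 w : 0 <= W w.
Proof. by apply: prodR_ge0 => l _; apply: line_weight_ge0. Qed.

Lemma prob_exists (U : finType) (A : {set U}) (E : U -> pred (outcome P L)) :
  prob (fun w => [exists u in A, E u w]) <= \big[Rplus/0]_(u in A) prob (E u).
Proof.
rewrite /prob big_mkcond /=.
under [X in _ <= X]eq_bigr => u _ do rewrite big_mkcond /=.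
rewrite exchange_big /=; apply: leR_sum => w _.
have terms_ge0 (B : pred U) : 0 <= \big[Rplus/0]_(u | B u) (if E u w then W w else 0).
  by apply: sumR_ge0 => u _; case: ifP => _; [apply: weight_ge0 | lra].
case: ifP => [/exists_inP[u uA Euw]|_]; last exact: terms_ge0.
by rewrite (bigD1 u) //= Euw; have := terms_ge0 (fun v => (v \in A) && (v != u)); lra.
Qed.

Lemma prob_ge_factorial_moment (X : outcome P L -> nat) k T : INR k <= T ->
  (T - INR k) ^ k * prob (fun w => Rleb T (INR (X w))) <=
  INR k`! * expect (fun w => INR 'C(X w, k)).
Proof.
move=> kT; rewrite /prob /expect [X in X <= _]big_distrr [X in _ <= X]big_distrr /=.
apply: Rle_trans (sumR_le_full _ _) => [|w]; last first.
  apply: Rmult_le_pos; [apply: pos_INR | apply: Rmult_le_pos; [apply: weight_ge0 | apply: pos_INR]].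
apply: leR_sum => w; rewrite /Rleb; case: Rle_dec => // TX _.
rewrite Rmult_comm -Rmult_assoc (Rmult_comm (INR _)) Rmult_assoc -INR_muln mulnC bin_ffact.
apply: Rmult_le_compat_l; first exact: weight_ge0.
have kX : (k <= X w)%N by apply/leP/INR_le; lra.
apply: Rle_trans (INR_leq (ffact_ge_pow (X w) k)); rewrite INR_expn INR_subn //.
by apply: pow_incr; lra.
Qed.

Lemma prob_mono (E F : pred (outcome P L)) : (forall w, E w -> F w) -> prob E <= prob F.
Proof.
move=> EF; rewrite /prob [X in _ <= X]big_mkcond [X in X <= _]big_mkcond /=.
apply: leR_sum => w _; case Ew: (E w); first by rewrite (EF w Ew); apply: Rle_refl.
by case: (F w); [apply: weight_ge0 | apply: Rle_refl].
Qed.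

Lemma expect_indicator (E : pred (outcome P L)) : expect (fun w => INR (E w)) = prob E.
Proof. by rewrite /prob big_mkcond; apply: eq_bigr => w _; case: (E w) => /=; ring. Qed.

(* The factor, on a line l, of the event "no point of K is selected". *)
Definition misses (K : {set P}) (o : option P) : R :=
  if o is Some y then (if y \in K then 0 else 1) else 1.

Lemma misses_ge0 (K : {set P}) o : 0 <= misses K o.
Proof. by rewrite /misses; case: o => [y|]; [case: ifP|]; lra. Qed.

(* The event "no point of K is selected" is dominated by a product over the
   lines: it only depends on the independent choices made on each line. *)
Lemma weight_disjoint_le (K : {set P}) w :
  (if [disjoint K & selected I x w] then W w else 0) <=
  \big[Rmult/1]_l (line_weight I s t alpha x l (w l) * misses K (w l)).
Proof.
case: ifP => [disj|_]; last first.
  by apply: prodR_ge0 => l _; apply: Rmult_le_pos; [apply: line_weight_ge0 | apply: misses_ge0].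
apply: Req_le; apply: eq_bigr => l _; rewrite /misses.
case wl: (w l) => [y|]; last by rewrite Rmult_1_r.
case: ifP => yK; last by rewrite Rmult_1_r.
rewrite Rmult_0_r /line_weight; case xl: (I x l) => //; case: ifP => // /andP[yl yx].
have : y \in selected I x w by rewrite inE; apply/existsP; exists l; rewrite xl yl yx wl eqxx.
by rewrite (disjointFr disj yK).
Qed.

Lemma line_misses_sum (K : {set P}) l : K \subset perp0 I x ->
  \big[Rplus/0]_o (line_weight I s t alpha x l o * misses K o) =
  1 - q * INR #|[set y in K | I x l && I y l]|.
Proof.
move=> Kx; rewrite (sumR_option x) /line_weight /=.
case xl: (I x l); last first.
  rewrite big1 => [|y _]; last by rewrite Rmult_0_l.
  by rewrite (_ : [set y in K | _] = set0) ?cards0 ?INR_0; [lra | apply/setP => y; rewrite !inE /= andbF].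
rewrite (eq_bigr (fun y => q * INR [&& I y l, y != x & y \notin K])) => [|y _]; last first.
  by rewrite /misses; case: (I y l); case: (y != x); case: (y \in K) => /=; lra.
rewrite -big_distrr /= -INR_sum.
set Kl := [set y in K | _]; set Dl := ([set z | I z l] :\ x) :\: K.
have Kl_eq : ([set z | I z l] :\ x) :&: K = Kl.
  apply/setP => y; rewrite !inE; case yK: (y \in K); rewrite ?andbF //=.
  by move: (subsetP Kx y yK); rewrite !inE andbT => /andP[-> _].
have sE : INR s = INR #|Kl| + INR #|Dl|.
  by rewrite -INR_addn -Kl_eq cardsID (line_minus_point_card HG xl).
have -> : (\sum_y [&& I y l, y != x & y \notin K] = #|Dl|)%N.
  by rewrite card_indicator; apply: eq_bigr => y _; rewrite !inE; case: (I y l); case: (y != x); case: (y \in K).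
have := q_times_s; move: (ps s t alpha / INR s) => q' qs.
by rewrite -qs sE; ring.
Qed.

(* Independence of the choices on distinct lines: a sum over outcomes of a
   product over lines factors line by line. *)
Lemma sum_outcome_prod (F : L -> option P -> R) :
  \big[Rplus/0]_(w : outcome P L) \big[Rmult/1]_l F l (w l) =
  \big[Rmult/1]_l \big[Rplus/0]_o F l o.
Proof. by rewrite bigA_distr_bigA. Qed.

Lemma prob_avoid (K : {set P}) : K \subset perp0 I x ->
  prob (fun w => [disjoint K & selected I x w]) <= exp (- (q * INR #|K|)).
Proof.
move=> Kx; pose m l := #|[set y in K | I x l && I y l]|.
have m_le_s l : (m l <= s)%N.
  case xl: (I x l); last by rewrite /m (_ : [set y in K | _] = set0) ?cards0 //; apply/setP => y; rewrite !inE xl andbF.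
  rewrite -(line_minus_point_card HG xl); apply: subset_leq_card; apply/subsetP => y.
  by rewrite !inE => /and3P[yK _ ->]; have := subsetP Kx y yK; rewrite !inE => /andP[-> _].
have K_covered : (#|K| <= \sum_l m l)%N.
  rewrite (eq_bigl (fun l => l \in [set: L])) => [|l]; last by rewrite inE.
  apply: card_le_sum_cover => y yK; have := subsetP Kx y yK.
  by rewrite !inE => /andP[_ /existsP[l /andP[xl yl]]]; exists l; rewrite ?inE ?yK ?xl.
rewrite /prob big_mkcond /=.
apply: Rle_trans (leR_sum (fun w _ => weight_disjoint_le K w)) _.
rewrite (sum_outcome_prod (fun l o => line_weight I s t alpha x l o * misses K o)).
under eq_bigr => l _ do rewrite line_misses_sum //.
apply: Rle_trans (_ : _ <= \big[Rmult/1]_l exp (- (q * INR (m l)))) _.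
  apply: leR_prod => l _; split; last by have := exp_ineq1_le (- (q * INR (m l))); rewrite /m; lra.
  have := Rmult_le_compat_l _ _ _ q_ge0 (INR_leq (m_le_s l)).
  by rewrite /m q_times_s; lra.
rewrite -exp_sum; apply: exp_le_mono.
rewrite (eq_bigr (fun l => - q * INR (m l))) => [|l _]; last by ring.
rewrite -big_distrr /= -INR_sum.
by have := Rmult_le_compat_l _ _ _ q_ge0 (INR_leq K_covered); lra.
Qed.

Lemma subset_U_disjoint_shadow u (A : {set P}) w :
  A \subset Uu I x w u -> [disjoint shadow I x u A & selected I x w].
Proof.
move=> AU; rewrite disjoints_subset; apply/subsetP => y.
rewrite !inE => /andP[/andP[yu _] /exists_inP[a aA ya]]; apply/negP => ysel.
have := subsetP AU a aA; rewrite inE => /andP[_ /negP[]].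
by rewrite inE; apply/exists_inP; exists y => //; rewrite !inE yu ysel.
Qed.

Lemma binomial_Xu w u k : 'C(Xu I x w u, k) =
  (\sum_(A in [set A : {set P} | A \subset perp I u :\: perp I x & #|A| == k])
     (A \subset Uu I x w u))%N.
Proof.
rewrite /Xu -cards_draws card_indicator [RHS]big_mkcond /=; apply: eq_bigr => A _.
have Uoff : Uu I x w u \subset ~: perp I x by apply/subsetP => z; rewrite !inE => /andP[].
rewrite !inE setDE !subsetI.
case AU: (A \subset Uu I x w u); last by rewrite !andbF; case: ifP.
by rewrite (subset_trans AU Uoff) andbT; case: ifP.
Qed.

Hypothesis HLS : locally_sparse I s.

(* The k-th binomial moment of X_u: each of the at most 'C(ts, k) sets A of k
   points of u^perp :\: x^perp survives in U(u) with probability at most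
   exp (- q |shadow A|), and |shadow A| >= kt - k(k-1)(s+1). *)
Lemma expect_binomial_Xu u k : u \in perp0 I x ->
  expect (fun w => INR 'C(Xu I x w u, k)) <=
  INR 'C(t * s, k) * exp (- (q * (INR (k * t) - INR (k * (k - 1) * s.+1)))).
Proof.
move=> Hu; set D := [set A : {set P} | A \subset perp I u :\: perp I x & #|A| == k].
rewrite /expect; under eq_bigr => w _ do rewrite binomial_Xu INR_sum big_distrr /=.
rewrite exchange_big /=.
apply: Rle_trans (_ : _ <= \big[Rplus/0]_(A in D) exp (- (q * (INR (k * t) - INR (k * (k - 1) * s.+1))))) _.
  apply: leR_sum => A; rewrite inE => /andP[AZ /eqP Ak].
  rewrite -[X in X <= _]/(expect _) expect_indicator.
  apply: Rle_trans (prob_mono (@subset_U_disjoint_shadow u A)) _.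
  apply: Rle_trans (prob_avoid _) _.
    by apply/subsetP => y; rewrite !inE => /andP[/andP[yu ->]].
  apply/exp_le_mono/Ropp_le_contravar/Rmult_le_compat_l; first exact: q_ge0.
  have := INR_leq (shadow_card HG HLS Hu AZ); rewrite Ak INR_addn; lra.
rewrite sumR_const; apply: Rmult_le_compat_r; first exact/Rlt_le/exp_pos.
by apply: INR_leq; rewrite cards_draws; apply/leq_bin2l/(perp_outside_card HG Hu).
Qed.

(* The tail bound: by the union bound over u in x^perp_circ and Markov's
   inequality for the k-th factorial moment of X_u, for every k < thr. *)
Lemma probB_le delta k :
  let thr := (1 + delta) * INR s * Rpower (ln (INR s)) alpha in
  INR k < thr ->
  probB I s t alpha delta x <=
  (INR t + 1) * INR s * ((INR t * INR s) ^ k *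
     exp (- (q * (INR k * INR t - INR k * (INR k - 1) * (INR s + 1))))) / (thr - INR k) ^ k.
Proof.
move=> thr k_thr; set M := exp _.
have M_ge0 : 0 <= M by apply/Rlt_le/exp_pos.
have thr_pos : 0 < (thr - INR k) ^ k by apply: pow_lt; lra.
have kkE : INR (k * (k - 1) * s.+1) = INR k * (INR k - 1) * (INR s + 1).
  by case: k {k_thr thr_pos M M_ge0} => [|k]; rewrite !INR_muln ?INR_0 ?S_INR ?subn1 /=; ring.
have tail u : u \in perp0 I x ->
    prob (fun w => Rleb thr (INR (Xu I x w u))) <= (INR t * INR s) ^ k * M / (thr - INR k) ^ k.
  move=> Hu; apply: (Rmult_le_reg_l _ _ _ thr_pos).
  have -> : (thr - INR k) ^ k * ((INR t * INR s) ^ k * M / (thr - INR k) ^ k) =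
    (INR t * INR s) ^ k * M by field; lra.
  apply: Rle_trans (prob_ge_factorial_moment _ (Rlt_le _ _ k_thr)) _.
  apply: Rle_trans (Rmult_le_compat_l _ _ _ (pos_INR _) (expect_binomial_Xu k Hu)) _.
  rewrite [INR (k * t)]INR_muln kkE -/M -Rmult_assoc -INR_muln mulnC bin_ffact -INR_muln -INR_expn.
  by apply: Rmult_le_compat_r => //; apply/INR_leq/ffact_le_pow.
change (probB I s t alpha delta x) with
  (prob (fun w => [exists u in perp0 I x, Rleb thr (INR (Xu I x w u))])).
apply: Rle_trans (prob_exists (perp0 I x) (fun u w => Rleb thr (INR (Xu I x w u)))) _.
apply: Rle_trans (leR_sum tail) _; rewrite sumR_const /Rdiv [X in _ <= X]Rmult_assoc.
apply: Rmult_le_compat_r.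
  apply: Rmult_le_pos; last exact/Rlt_le/Rinv_0_lt_compat.
  by apply: Rmult_le_pos => //; apply/pow_le/Rmult_le_pos; apply: pos_INR.
by rewrite -S_INR -INR_muln; apply/INR_leq/perp0_card.
Qed.
End RandomSelection.

(* Estimates in the regime s (log s)^(2 alpha) <= t <= 2 s^2, on real
   arguments S and T standing for s and t. *)
Section Asymptotics.
Variables (S T a : R).
Hypothesis HS : 3 <= S.
Hypothesis HL : 2 <= ln S.
Hypothesis Ha : 4 < a.
Hypothesis HT_lo : S * Rpower (ln S) (2 * a) <= T.
Hypothesis HT_hi : T <= 2 * S ^ 2.

Local Notation L := (ln S).
(* the selection probability ps, on real arguments S = s and T = t *)
Local Notation p := ((S * ln T - a * S * ln (ln S)) / T).

Lemma pow_le_Rpower (n : nat) b : INR n <= b -> L ^ n <= Rpower L b.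
Proof. by move=> nb; rewrite -Rpower_pow; [apply: Rle_Rpower => //; lra | lra]. Qed.

Lemma T_ge : S * L ^ 8 <= T.
Proof.
apply: Rle_trans HT_lo; apply: Rmult_le_compat_l; first lra.
by apply: pow_le_Rpower; rewrite /INR /=; lra.
Qed.

Lemma T_pos : 0 < T.
Proof. by have := T_ge; have := pow_R1_Rle L 8 (ltac:(lra)); nra. Qed.

(* a ln L <= ln T <= 3 L, from L^a <= T <= S^3 *)
Lemma lnT_bounds : a * ln L <= ln T <= 3 * L.
Proof.
split.
  rewrite -ln_Rpower; apply: ln_le_mono; first exact: exp_pos.
  apply: Rle_trans (Rle_Rpower _ a (2 * a) _ _) _; try lra.
  by have := HT_lo; have := exp_pos (2 * a * ln L); rewrite /Rpower; nra.
have -> : 3 * L = ln (S ^ 3) by rewrite ln_pow; [rewrite /INR /=; ring | lra].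
by apply: ln_le_mono; [exact: T_pos | nra].
Qed.

Lemma p_times_T : p * T = S * (ln T - a * ln L).
Proof. by field; have := T_pos; lra. Qed.

Lemma p_ge0 : 0 <= p.
Proof.
have := lnT_bounds; have := T_pos => T0 [lo _].
apply: (Rmult_le_reg_r T) => //; rewrite Rmult_0_l p_times_T; apply: Rmult_le_pos; lra.
Qed.

Lemma p_small : p * L ^ 7 <= 3.
Proof.
have := lnT_bounds; have := T_ge; have := p_ge0; have := p_times_T.
have L0 : 0 < L by lra.
have La : 0 <= a * ln L by apply: Rmult_le_pos; [lra | rewrite -ln_1; apply: ln_le_mono; lra].
move=> pT p0 TS [_ hi].
have pT_le : p * T <= S * (3 * L) by rewrite pT; apply: Rmult_le_compat_l; lra.
apply: (Rmult_le_reg_r (S * L)); first nra.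
have -> : p * L ^ 7 * (S * L) = p * (S * L ^ 8) by ring.
by have := Rmult_le_compat_l _ _ _ p0 TS; lra.
Qed.

Lemma p_le1 : p <= 1.
Proof.
have L7 : 4 <= L ^ 7.
  by apply: Rle_trans (Rle_pow L 2 7 _ _); [rewrite /= Rmult_1_r; nra | lra | apply/leP].
by have := p_small; have := p_ge0; nra.
Qed.

(* exp (- p T / S) = L^a / T: this is how ps was chosen. *)
Lemma exp_killed : exp (- (p / S * T)) = Rpower L a / T.
Proof.
have T0 := T_pos.
have -> : p / S * T = ln T - a * ln L by field; lra.
by rewrite /Rpower Ropp_minus_distr exp_plus exp_Ropp exp_ln // Rmult_comm.
Qed.

(* The main term of the tail bound collapses: (T S)^k exp (- p k T / S) is
   the k-th power of the threshold scale mu = S L^a. *)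
Lemma tail_main_term (k : nat) :
  let K := INR k in
  (T * S) ^ k * exp (- (p / S * (K * T - K * (K - 1) * (S + 1)))) =
  (S * Rpower L a) ^ k * exp (p / S * (K * (K - 1) * (S + 1))).
Proof.
move=> K; have T0 := T_pos.
have -> : - (p / S * (K * T - K * (K - 1) * (S + 1))) =
  K * - (p / S * T) + p / S * (K * (K - 1) * (S + 1)) by ring.
rewrite exp_plus exp_mul_nat exp_killed -Rmult_assoc -Rpow_mult_distr.
by congr (_ ^ _ * _); field; lra.
Qed.

Lemma correction_le1 b K : 0 <= K <= b * L -> 6 * b ^ 2 <= L ^ 5 ->
  p / S * (K * (K - 1) * (S + 1)) <= 1.
Proof.
move=> [K0 KbL] bL; have p0 := p_ge0; have pL := p_small; have T0 := T_pos.
have L5 : 0 < L ^ 5 by apply: pow_lt; lra.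
have pS : 0 <= p / S * (S + 1) <= 2 * p.
  have -> : p / S * (S + 1) = p + p * / S by field; repeat split; lra.
  have : 0 < / S <= 1.
    by split; [apply: Rinv_0_lt_compat | rewrite -Rinv_1; apply: Rinv_le_contravar]; lra.
  by split; nra.
have KK : K * (K - 1) <= (b * L) ^ 2 by rewrite /= Rmult_1_r; nra.
have pbL : 2 * p * (b * L) ^ 2 <= 1.
  have -> : 2 * p * (b * L) ^ 2 = 2 * b ^ 2 * (p * L ^ 7) / L ^ 5 by field; repeat split; lra.
  apply: (Rmult_le_reg_r (L ^ 5)) => //; rewrite Rmult_1_l /Rdiv Rmult_assoc Rinv_l ?Rmult_1_r; last lra.
  by have := pow2_ge_0 b; nra.
have -> : p / S * (K * (K - 1) * (S + 1)) = (p / S * (S + 1)) * (K * (K - 1)) by ring.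
by apply: Rle_trans (Rmult_le_compat_l _ _ _ (proj1 pS) KK) _; have := pow2_ge_0 (b * L); nra.
Qed.
End Asymptotics.

Lemma ratio_pow_le mu d K (k : nat) : 0 < mu -> 0 < d -> 0 <= K <= d / 2 * mu ->
  mu ^ k / ((1 + d) * mu - K) ^ k <= exp (- (INR k * ln (1 + d / 2))).
Proof.
move=> mu0 d0 [K0 Kmu]; have D0 : 0 < (1 + d) * mu - K by nra.
rewrite /Rdiv -pow_inv -Rpow_mult_distr Ropp_mult_distr_r exp_mul_nat.
apply: pow_incr; split; first by apply: Rmult_le_pos; [lra | apply/Rlt_le/Rinv_0_lt_compat].
rewrite exp_Ropp exp_ln; last lra.
apply: (Rmult_le_reg_l (1 + d / 2)); first lra.
rewrite Rinv_r; last lra.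
apply: (Rmult_le_reg_r ((1 + d) * mu - K)) => //.
have -> : (1 + d / 2) * (mu * / ((1 + d) * mu - K)) * ((1 + d) * mu - K) = (1 + d / 2) * mu.
  by field; lra.
lra.
Qed.

(* The number of moments used: k is about moment_const d * ln s. *)
Definition moment_const (d : R) : R := 6 / ln (1 + d / 2).

Lemma moment_const_pos d : 0 < d -> 0 < moment_const d.
Proof. by move=> d0; apply: Rdiv_lt_0_compat; [lra | rewrite -ln_1; apply: ln_increasing; lra]. Qed.

Definition s_threshold (d eps : R) : R :=
  exp (6 * (moment_const d + 1) ^ 2 + 1) + 2 * (moment_const d + 1) / d + 9 / eps + 3.

Lemma s_threshold_gt3 d eps : 0 < d -> 0 < eps -> 3 < s_threshold d eps.
Proof.
move=> d0 e0; rewrite /s_threshold; set c := moment_const d.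
have c0 : 0 < c := moment_const_pos d0.
have := exp_pos (6 * (c + 1) ^ 2 + 1).
have : 0 <= 2 * (c + 1) / d by apply: Rmult_le_pos; [lra | apply/Rlt_le/Rinv_0_lt_compat].
have : 0 <= 9 / eps by apply: Rmult_le_pos; [lra | apply/Rlt_le/Rinv_0_lt_compat].
lra.
Qed.

Lemma above_threshold d eps S : 0 < d -> 0 < eps -> s_threshold d eps < S ->
  let c := moment_const d in
  [/\ 3 <= S, 6 * (c + 1) ^ 2 + 1 <= ln S, c + 1 <= d / 2 * S & 9 / eps < S].
Proof.
move=> d0 e0 HS c; have c0 : 0 < c := moment_const_pos d0.
have cd_ge0 : 0 <= 2 * (c + 1) / d by apply: Rmult_le_pos; [lra | apply/Rlt_le/Rinv_0_lt_compat].
have eps_ge0 : 0 <= 9 / eps by apply: Rmult_le_pos; [lra | apply/Rlt_le/Rinv_0_lt_compat].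
have E0 := exp_pos (6 * (c + 1) ^ 2 + 1).
rewrite /s_threshold -/c in HS; split; try lra.
  by rewrite -[X in X <= _]ln_exp; apply: ln_le_mono; lra.
apply: (Rmult_le_reg_r (2 / d)); first by apply: Rdiv_lt_0_compat; lra.
have -> : d / 2 * S * (2 / d) = S by field; lra.
have -> : (c + 1) * (2 / d) = 2 * (c + 1) / d by field; lra.
lra.
Qed.

Lemma three_factors_small F E Q S eps : 3 <= S -> 0 < eps -> 9 / eps < S ->
  0 <= F <= 3 * S ^ 3 -> 0 <= E <= 3 -> 0 <= Q <= / S ^ 6 -> F * E * Q < eps.
Proof.
move=> HS He HSe [F0 F3] [E0 E3] [Q0 Q6].
have FE : F * E <= 3 * S ^ 3 * 3 by apply: Rmult_le_compat.
apply: Rle_lt_trans (Rmult_le_compat _ _ _ _ (Rmult_le_pos _ _ F0 E0) Q0 FE Q6) _.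
have -> : 3 * S ^ 3 * 3 * / S ^ 6 = 9 / S ^ 3 by field; lra.
apply: (Rle_lt_trans _ (9 / S)).
  by apply: Rmult_le_compat_l; [lra | apply: Rinv_le_contravar; rewrite /=; nra].
apply: (Rmult_lt_reg_r S); first lra.
have -> : 9 / S * S = 9 by field; lra.
have : 9 / eps * eps = 9 by field; lra.
nra.
Qed.

(* Its three factors are
   (T+1) S <= 3 S^3, the correction exp (p/S K (K-1) (S+1)) <= e < 3, and
   (mu / ((1+d) mu - K))^k <= (1 + d/2)^-k <= S^-6 with mu = S L^a. *)
Lemma tail_bound_small S T a d eps (k : nat) :
  let L := ln S in let c := moment_const d in let K := INR k in
  let thr := (1 + d) * S * Rpower L a in
  let p := (S * ln T - a * S * ln L) / T in
  4 < a -> 0 < d -> 0 < eps -> s_threshold d eps < S ->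
  S * Rpower L (2 * a) <= T -> T <= 2 * S ^ 2 -> c * L < K <= c * L + 1 ->
  [/\ 0 <= p <= 1, K < thr &
  (T + 1) * S * ((T * S) ^ k * exp (- (p / S * (K * T - K * (K - 1) * (S + 1))))) /
    (thr - K) ^ k < eps].
Proof.
move=> L c K thr p Ha Hd He HSB HT_lo HT_hi [cK Kc].
have [HS HL HSd HSe] := above_threshold Hd He HSB; rewrite -/c -/L in HL HSd.
have c_pos : 0 < c := moment_const_pos Hd.
have c1 : 1 <= (c + 1) ^ 2 by rewrite /= Rmult_1_r; nra.
have L2 : 2 <= L by lra.
have T0 : 0 < T.
  by apply: Rlt_le_trans HT_lo; apply: Rmult_lt_0_compat; [lra | apply: exp_pos].
have L_pow5 : L <= L ^ 5 by rewrite -{1}(pow_1 L); apply: Rle_pow; [lra | apply/leP].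
pose mu := S * Rpower L a.
have mu_ge : S * L <= mu.
  rewrite /mu -{1}(Rpower_1 L); last lra.
  by apply: Rmult_le_compat_l; [lra | apply: Rle_Rpower; lra].
have K_mu : 0 <= K <= d / 2 * mu by split; nra.
have D0 : 0 < (1 + d) * mu - K by nra.
have -> : thr = (1 + d) * mu by rewrite /thr /mu; ring.
split; [exact: conj (p_ge0 HS L2 Ha HT_lo HT_hi) (p_le1 HS L2 Ha HT_lo HT_hi) | nra |].
rewrite (tail_main_term HS L2 Ha HT_lo k) -/mu.
have -> : (T + 1) * S * (mu ^ k * exp (p / S * (K * (K - 1) * (S + 1)))) / ((1 + d) * mu - K) ^ k =
    (T + 1) * S * exp (p / S * (K * (K - 1) * (S + 1))) * (mu ^ k / ((1 + d) * mu - K) ^ k).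
  by field; apply: pow_nonzero; lra.
apply: (three_factors_small HS He HSe); split.
- by apply: Rmult_le_pos; lra.
- by rewrite /=; nra.
- exact/Rlt_le/exp_pos.
- apply: Rle_trans exp_le_3; apply: exp_le_mono.
  by apply: (correction_le1 HS L2 Ha HT_lo HT_hi (b := c + 1)); rewrite -/L; [split; nra | lra].
- by apply: Rmult_le_pos; [apply: pow_le | apply/Rlt_le/Rinv_0_lt_compat/pow_lt]; nra.
apply: Rle_trans (ratio_pow_le k _ Hd K_mu) _; first nra.
rewrite -(exp_ln S); last lra.
rewrite -pow_inv -exp_Ropp -exp_mul_nat; apply: exp_le_mono.
have ln_pos : 0 < ln (1 + d / 2) by rewrite -ln_1; apply: ln_increasing; lra.
have c_ln : c * ln (1 + d / 2) = 6 by rewrite /c /moment_const; field; lra.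
have -> : INR 6 = 6 by rewrite /INR; ring.
by rewrite -/K -/L; nra.
Qed.

Lemma nat_ceiling r : 0 <= r -> exists k : nat, r < INR k <= r + 1.
Proof.
move=> r0; have [up_gt up_le] := archimed r.
exists (Z.to_nat (up r)); rewrite INR_IZR_INZ Znat.Z2Nat.id; first lra.
by apply: le_IZR; lra.
Qed.

Theorem mainTheorem4 (alpha delta : R) (Halpha : Rlt 4 alpha) (Hdelta : Rlt 0 delta) :
  forall eps : R, Rlt 0 eps ->
  exists s0 : nat,
    forall (P L : finType) (I : P -> L -> bool) (s t : nat),
      is_GQ I s t -> locally_sparse I s -> (s0 <= s)%N ->
      Rle (Rmult (INR s) (Rpower (ln (INR s)) (Rmult 2 alpha))) (INR t) ->
      forall x : P, Rlt (probB I s t alpha delta x) eps.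
Proof.
move=> eps He.
have thr_ge0 : 0 <= s_threshold delta eps by have := s_threshold_gt3 Hdelta He; lra.
have [s0 [s0_large _]] := nat_ceiling thr_ge0.
exists s0 => P L I s t HG HLS s0s HT_lo x.
have s_large : s_threshold delta eps < INR s by apply: Rlt_le_trans s0_large (INR_leq s0s).
have HT_hi : INR t <= 2 * INR s ^ 2.
  by have := INR_leq (t_le_2s2 x HG HLS); rewrite INR_muln INR_expn /= Rmult_1_r.
have moment_ge0 : 0 <= moment_const delta * ln (INR s).
  apply: Rmult_le_pos; first exact/Rlt_le/moment_const_pos.
  by rewrite -ln_1; apply: ln_le_mono; have := s_threshold_gt3 Hdelta He; lra.
have [k k_moment] := nat_ceiling moment_ge0.
have [ps_prob k_thr tail] := tail_bound_small Halpha Hdelta He s_large HT_lo HT_hi k_moment.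
exact: Rle_lt_trans (probB_le x HG ps_prob HLS k_thr) tail.
Qed.
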